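(* Let $G$ and $\ell$ be as in the construction described in the context. If for some $q\in[t]$ the instance $(X,\mathcal{S}_q)$ of \textsc{Exact-3-Cover} is a Yes-instance, then $G$ has an acyclic matching of size $\ell$.
   Context: Construction. Let $n=3c$ with $c\in\mathbb{N}$, $X=[n]$, and let $(X,\mathcal{S}_1),\dots,(X,\mathcal{S}_t)$ be instances of \textsc{Exact-3-Cover} (each $\mathcal{S}_i$ a collection of 3-element subsets of $X$, all $\mathcal{S}_i$ of the same size $m$ and pairwise distinct as collections). An instance $(X,\mathcal{S})$ is a Yes-instance if some subcollection of $\mathcal{S}$ covers every element of $X$ exactly once. Let $\mathcal{C}=\bigcup_{i\in[t]}\mathcal{S}_i=\{s_1,\dots,s_{|\mathcal{C}|}\}$ (distinct 3-sets). The graph $G$: a vertex set $X'=\{v_a:a\in X\}$; for each $s_j=\{a,b,c\}\in\mathcal{C}$ a set gadget $Q_j$ with vertices $u_{ja},u_{jb},u_{jc}$ (interface vertices), $u_j,w_j,u_j',w_j'$, where each of $u_j,w_j$ is adjacent to each of $u_{ja},u_{jb},u_{jc}$, and additionally $u_jw_j,u_ju_j',w_jw_j'$ are edges; for each $s_j\in\mathcal{C}$ and $d\in s_j$ the edge $u_{jd}v_d$ (cross edges); a vertex $p$ and vertices $P=\{p_1,\dots,p_t\}$ with edges $pp_i$ for all $i$; and for each $i\in[t]$ and each $s_j\in\mathcal{C}\setminus\mathcal{S}_i$, edges from $p_i$ to the three interface vertices of $Q_j$. There are no other edges. Set $\ell=2|\mathcal{C}|+\frac{2n}{3}+1$. A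 matching $M$ is acyclic if the subgraph induced by the endpoints of its edges is a forest. *)

From HB Require Import structures.
From mathcomp Require Import all_boot.
Set Implicit Arguments. Unset Strict Implicit. Unset Printing Implicit Defensive.

Section Graphs.
Variable T : finType.
Variable V : {set T}.
Variable e : rel T.

Definition is_matching (M : {set {set T}}) : Prop :=
  (forall E, E \in M -> exists x y, [/\ x \in V, y \in V, x != y, e x y & E = [set x; y]])
  /\ (forall E F, E \in M -> F \in M -> E != F -> [disjoint E & F]).

Definition has_cycle_in (U : {set T}) : Prop :=
  exists s : seq T, [/\ 3 <= size s, uniq s, all (fun x => x \in U) s & cycle e s].

Definition induced_forest (U : {set T}) : Prop := ~ has_cycle_in U.

Definition acyclic_matching (M : {set {set T}}) : Prop :=
  is_matching M /\ induced_forest (cover M).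
End Graphs.

Definition X3C_yes (n : nat) (S : {set {set 'I_n}}) : Prop :=
  exists sub : {set {set 'I_n}}, sub \subset S /\
    forall a : 'I_n, #|[set s in sub | a \in s]| = 1.

Inductive vert (n t : nat) :=
| VX of 'I_n
| VI of {set 'I_n} & 'I_n         (* interface vertex u_{j a} of gadget of s_j *)
| VU of {set 'I_n}
| VW of {set 'I_n}
| VU' of {set 'I_n}
| VW' of {set 'I_n}
| VP
| VPi of 'I_t.

Section Construction.
Variables n t : nat.

Definition vcode (v : vert n t) :
  ('I_n + ({set 'I_n} * 'I_n)) + (({set 'I_n} * 'I_4) + option 'I_t) :=
  match v with
  | VX a => inl (inl a)
  | VI s a => inl (inr (s, a))
  | VU s => inr (inl (s, inord 0))
  | VW s => inr (inl (s, inord 1))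
  | VU' s => inr (inl (s, inord 2))
  | VW' s => inr (inl (s, inord 3))
  | VP => inr (inr None)
  | VPi i => inr (inr (Some i))
  end.

Definition vdecode (x : ('I_n + ({set 'I_n} * 'I_n)) + (({set 'I_n} * 'I_4) + option 'I_t))
  : vert n t :=
  match x with
  | inl (inl a) => @VX n t a
  | inl (inr (s, a)) => @VI n t s a
  | inr (inl (s, k)) =>
      match val k with 0 => @VU n t s | 1 => @VW n t s | 2 => @VU' n t s | _ => @VW' n t s end
  | inr (inr None) => @VP n t
  | inr (inr (Some i)) => @VPi n t i
  end.

Lemma vcodeK : cancel vcode vdecode.
Proof. by case=> //= s; rewrite inordK. Qed.

HB.instance Definition _ := Finite.copy (vert n t) (can_type vcodeK).
End Construction.

Section Graph.
Variables n t : nat.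
Variable S : 'I_t -> {set {set 'I_n}}.

Definition Cset : {set {set 'I_n}} := \bigcup_(i < t) S i.

Definition Gvert : {set vert n t} :=
  [set v | match v with
           | VX _ | VP | VPi _ => true
           | VI s a => (s \in Cset) && (a \in s)
           | VU s | VW s | VU' s | VW' s => s \in Cset
           end].

Definition Gbase (x y : vert n t) : bool :=
  match x, y with
  | VI s a, VU s' => [&& s == s', s \in Cset & a \in s]
  | VI s a, VW s' => [&& s == s', s \in Cset & a \in s]
  | VU s, VW s' => (s == s') && (s \in Cset)
  | VU s, VU' s' => (s == s') && (s \in Cset)
  | VW s, VW' s' => (s == s') && (s \in Cset)
  | VI s a, VX b => [&& a == b, s \in Cset & a \in s]
  | VP, VPi _ => true
  | VPi i, VI s a => [&& s \in Cset, a \in s & s \notin S i]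
  | _, _ => false
  end.

Definition Gadj : rel (vert n t) := fun x y => Gbase x y || Gbase y x.

(* ell = 2|C| + 2n/3 + 1, with n = 3c *)
End Graph.

(* Let sub be an exact cover of X = [n] taken from S_q, and write f(a) for the
   block of sub containing a.  The matching M consists of the edges
     u_j u_j' (s_j in C),  w_j w_j' (s_j in C \ sub),  v_a u_{f(a),a} (a in X),
   and p p_q, so |M| = |C| + (|C| - n/3) + n + 1 = 2|C| + 2n/3 + 1.
   Each edge is written {x, partner x} with x an "anchor"; since partner maps
   anchors injectively to non-anchors, these edges form a matching (Section
   PairMatching).  The matched vertices induce a forest because they can be
   ranked so that every matched neighbour of no smaller rank is a designated
   parent (v_a -> u_{f(a),a} -> u_j -> w_j, u_j' -> u_j, w_j' -> w_j,
   p_q -> p): a vertex of minimum rank on a cycle would then have its two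
   cycle neighbours equal (Section ParentRanking). *)

From mathcomp Require Import all_boot zify.
Set Implicit Arguments. Unset Strict Implicit.

Section ParentRanking.
Variables (T : finType) (e : rel T) (W : {set T}) (rank : T -> nat) (parent : T -> T).
Hypothesis e_sym : symmetric e.
Hypothesis upward_parent : forall x y,
  x \in W -> y \in W -> e x y -> rank x <= rank y -> y = parent x.

Lemma induced_forest_of_parent : induced_forest e W.
Proof.
move=> [s [size_s uniq_s W_s cycle_s]].
have [x0 x0s] : exists x0, x0 \in s.
  by case: s size_s {uniq_s W_s cycle_s} => // x0 s _; exists x0; rewrite mem_head.
case: (@arg_minnP _ x0 (mem s) rank x0s) => x xs x_min.
case/rot_to: xs => i s' rot_s.
move: uniq_s cycle_s size_s; rewrite -(rot_uniq i) -(rot_cycle i) -(size_rot i) rot_s.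
case: s' rot_s => [|y [|z r]] rot_s //= uniq_s cycle_s _.
have in_s w : w \in [:: x, y, z & r] -> w \in s by rewrite -rot_s mem_rot.
have up w : w \in [:: x, y, z & r] -> e x w -> w = parent x.
  move=> ws exw; apply: upward_parent => //; last exact/x_min/in_s.
  - exact/(allP W_s)/in_s/mem_head.
  - exact/(allP W_s)/in_s.
move: cycle_s; rewrite rcons_path /= => /and4P[exy _ _ elx].
have lzr : last z r \in z :: r by exact: mem_last.
have y_par : y = parent x by apply: up; rewrite // in_cons mem_head orbT.
have l_par : last z r = parent x.
  apply: up; last by rewrite e_sym.
  by rewrite 2!in_cons lzr !orbT.
by case/and4P: uniq_s => _ /negP[]; rewrite y_par -l_par.
Qed.
End ParentRanking.

Section PairMatching.
Variables (T : finType) (V : {set T}) (e : rel T) (R : {set T}) (partner : T -> T).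
Hypothesis partner_out : forall x, x \in R -> partner x \notin R.
Hypothesis partner_inj : {in R &, injective partner}.

Definition pair_edges : {set {set T}} := [set [set x; partner x] | x in R].

(* x is recovered from {x, partner x}: it is the endpoint lying in R. *)
Lemma pair_edge_inj : {in R &, injective (fun x => [set x; partner x])}.
Proof.
move=> x y xR yR /= exy; have : x \in [set y; partner y] by rewrite -exy set21.
rewrite !inE => /orP[/eqP // | /eqP x_py].
by move: xR; rewrite x_py (negbTE (partner_out yR)).
Qed.

Lemma card_pair_edges : #|pair_edges| = #|R|.
Proof. exact: card_in_imset pair_edge_inj. Qed.

Lemma pair_edges_matching :
  (forall x, x \in R -> [&& x \in V, partner x \in V & e x (partner x)]) ->
  is_matching V e pair_edges.
Proof.
move=> partner_edge; split.
  move=> E /imsetP[x xR ->]; exists x, (partner x).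
  case/and3P: (partner_edge x xR) => xV pxV exp; split=> //.
  by apply: contraNneq (partner_out xR) => <-.
move=> E F /imsetP[x xR ->] /imsetP[y yR ->] E_neq_F.
have x_neq_y : x != y by apply: contraNneq E_neq_F => ->.
rewrite -setI_eq0; apply/eqP/setP => v; rewrite !inE.
apply/negP => /andP[/orP[]/eqP-> /orP[]/eqP v_eq].
- by rewrite v_eq eqxx in x_neq_y.
- by move: xR; rewrite v_eq (negbTE (partner_out yR)).
- by move: yR; rewrite -v_eq (negbTE (partner_out xR)).
- by rewrite (partner_inj xR yR v_eq) eqxx in x_neq_y.
Qed.

Lemma cover_pair_edges v :
  v \in cover pair_edges -> exists2 x, x \in R & (v = x \/ v = partner x).
Proof.
case/bigcupP=> _ /imsetP[x xR ->]; rewrite !inE => /orP[]/eqP ->;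
  exists x => //; by [left | right].
Qed.
End PairMatching.

Section ExactCover.
Variables (n : nat) (sub : {set {set 'I_n}}).
Hypothesis exactly_once : forall a : 'I_n, #|[set s in sub | a \in s]| = 1.

Definition block (a : 'I_n) : {set 'I_n} := odflt set0 [pick s in sub | a \in s].

Lemma blocks_at a : [set s in sub | a \in s] = [set block a].
Proof.
have /cards1P[s0 blocks_s0] : #|[set s in sub | a \in s]| == 1 by rewrite exactly_once.
have : s0 \in [set s in sub | a \in s] by rewrite blocks_s0 set11.
rewrite inE => s0_in; rewrite /block; case: pickP => [s s_in | /(_ s0)]; last by rewrite s0_in.
have : s \in [set s in sub | a \in s] by rewrite inE.
by rewrite blocks_s0 => /set1P ->.
Qed.

Lemma blockP a : block a \in sub /\ a \in block a.
Proof. by have := set11 (block a); rewrite -blocks_at inE => /andP. Qed.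

Lemma block_uniq a s : s \in sub -> a \in s -> s = block a.
Proof. by move=> s_sub a_s; apply/set1P; rewrite -blocks_at inE s_sub. Qed.

(* Double counting incidences: k-element blocks covering n points number n/k. *)
Lemma card_exact_cover k : (forall s, s \in sub -> #|s| = k) -> k * #|sub| = n.
Proof.
move=> size_k; transitivity (\sum_(s in sub) \sum_(a in s) 1).
  rewrite mulnC -sum_nat_const; apply: eq_bigr => s s_sub.
  by rewrite sum1_card size_k.
rewrite (exchange_big_dep predT) //=.
transitivity (\sum_(a : 'I_n) 1); last by rewrite sum1_card card_ord.
apply: eq_bigr => a _.
by rewrite sum1_card -(exactly_once a); apply: eq_card => s; rewrite inE.
Qed.
End ExactCover.

Lemma card_union_disjoint (T : finType) (A B : {set T}) :
  (forall x, x \in A -> x \notin B) -> #|A :|: B| = #|A| + #|B|.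
Proof.
move=> AnB; rewrite cardsU; suff -> : A :&: B = set0 by rewrite cards0 subn0.
by apply/setP => x; rewrite !inE; apply/negP => /andP[/AnB/negP].
Qed.

Section Construction.
Variables (n t : nat) (S : 'I_t -> {set {set 'I_n}}) (q : 'I_t) (sub : {set {set 'I_n}}).
Hypothesis sub_q : sub \subset S q.
Hypothesis exactly_once : forall a : 'I_n, #|[set s in sub | a \in s]| = 1.

Local Notation C := (Cset S).
Local Notation vert := (vert n t).
Arguments VX {n t}. Arguments VI {n t}. Arguments VU {n t}. Arguments VW {n t}.
Arguments VU' {n t}. Arguments VW' {n t}. Arguments VP {n t}. Arguments VPi {n t}.

Lemma sub_C : sub \subset C.
Proof. by apply/subsetP => s /(subsetP sub_q) s_q; apply/bigcupP; exists q. Qed.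

Lemma block_C a : block sub a \in C.
Proof. by have [block_sub _] := blockP exactly_once a; apply: (subsetP sub_C). Qed.

Definition is_anchor (v : vert) : bool :=
  match v with
  | VU' s => s \in C
  | VW' s => (s \in C) && (s \notin sub)
  | VX _ | VP => true
  | _ => false
  end.

Definition anchors : {set vert} :=
  [set VU' s | s in C] :|: [set VW' s | s in C :\: sub] :|: [set VX a | a : 'I_n] :|: [set VP].

Definition partner (v : vert) : vert :=
  match v with
  | VU' s => VU s
  | VW' s => VW s
  | VX a => VI (block sub a) a
  | VP => VPi q
  | _ => v
  end.

Lemma in_anchors v : (v \in anchors) = is_anchor v.
Proof.
apply/idP/idP.
  rewrite !inE => /orP[/orP[/orP[]|]|/eqP-> //] /imsetP[s s_in ->] //=.
  by rewrite inE andbC in s_in.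
case: v => //= [a _ | s s_in | s /andP[s_in s_nsub] |]; rewrite !inE ?imset_f ?orbT //.
by rewrite inE s_in s_nsub.
Qed.

Lemma card_anchors : #|anchors| = #|C| + #|C :\: sub| + n + 1.
Proof.
rewrite /anchors !card_union_disjoint.
- by rewrite !card_imset ?cards1 ?cardsT ?card_ord // => x y [].
- by move=> x /imsetP[s _ ->]; apply/imsetP => -[s' _].
- by move=> x /setUP[] /imsetP[s _ ->]; apply/imsetP => -[a _].
- by move=> x /setUP[/setUP[]|] /imsetP[s _ ->]; rewrite inE.
Qed.

Lemma partner_out x : x \in anchors -> partner x \notin anchors.
Proof. by rewrite !in_anchors; case: x. Qed.

Lemma partner_inj : {in anchors &, injective partner}.
Proof.
move=> x y; rewrite !in_anchors.
by case: x => [a|s a|s|s|s|s||i]; case: y => [b|s' b|s'|s'|s'|s'||j] //= _ _ [] *; congruence.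
Qed.

Lemma anchor_edge x :
  x \in anchors -> [&& x \in Gvert S, partner x \in Gvert S & Gadj S x (partner x)].
Proof.
rewrite in_anchors; case: x => //= [a _ | s s_C | s /andP[s_C _] |];
  rewrite !inE /Gadj /= ?eqxx ?s_C ?orbT //.
by have [_ ->] := blockP exactly_once a; rewrite block_C.
Qed.

Definition matched (v : vert) : bool :=
  match v with
  | VX _ | VP => true
  | VI s a => (s \in sub) && (a \in s)
  | VU s | VU' s => s \in C
  | VW s | VW' s => (s \in C) && (s \notin sub)
  | VPi i => i == q
  end.

Lemma anchor_matched x : x \in anchors -> matched x && matched (partner x).
Proof.
rewrite in_anchors; case: x => //= [a _ | s -> | s /andP[-> ->]] //.
by have [-> ->] := blockP exactly_once a.
Qed.

Lemma cover_matched v : v \in cover (pair_edges anchors partner) -> matched v.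
Proof. by case/cover_pair_edges => x /anchor_matched /andP[? ?] [] ->. Qed.

Definition rank (v : vert) : nat :=
  match v with
  | VX _ | VU' _ | VW' _ | VPi _ => 1
  | VI _ _ | VP => 2
  | VU s => if s \in sub then 3 else 2
  | VW _ => 3
  end.

Definition parent (v : vert) : vert :=
  match v with
  | VX a => VI (block sub a) a
  | VI s _ | VU' s => VU s
  | VU s | VW s | VW' s => VW s
  | VP | VPi _ => VP
  end.

(* The edges u_{ja} w_j
   and p_q u_{ja} do not occur among matched vertices, since s_j in sub. *)
Lemma matched_parent x y :
  matched x -> matched y -> Gadj S x y -> rank x <= rank y -> y = parent x.
Proof.
case: x => [a|s a|s|s|s|s||i]; case: y => [b|s' b|s'|s'|s'|s'||j] //=;
  rewrite /Gadj /= ?orbF.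
- (* v_a -> u_{ja} *)
  move=> _ /andP[s'_sub _] /and3P[/eqP -> _ a_s'] _.
  by rewrite -(block_uniq exactly_once s'_sub a_s').
- (* u_{ja} -> u_j *) by move=> _ _ /andP[/eqP ->].
- (* u_{ja} w_j *) move=> /andP[s_sub _] /andP[_ s'_nsub] /andP[/eqP s_s'].
  by rewrite -s_s' s_sub in s'_nsub.
- (* u_j above u_{ja} *) by move=> _ /andP[s'_sub _] /andP[/eqP s'_s]; rewrite -s'_s s'_sub.
- (* u_j -> w_j *) by move=> _ _ /andP[/eqP ->].
- (* u_j above u_j' *) by move=> _ _ _; case: ifP.
- (* w_j above u_j *) by move=> /andP[_ s_nsub] _ /andP[/eqP ->]; rewrite (negbTE s_nsub).
- (* u_j' -> u_j *) by move=> _ _ /andP[/eqP ->].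
- (* w_j' -> w_j *) by move=> _ _ /andP[/eqP ->].
- (* p_q u_{ja} *) by move=> /eqP-> /andP[s'_sub _] /and3P[_ _]; rewrite (subsetP sub_q _ s'_sub).
Qed.
End Construction.

Lemma Gadj_sym n t (S : 'I_t -> {set {set 'I_n}}) : symmetric (Gadj S).
Proof. by move=> x y; rewrite /Gadj orbC. Qed.

Theorem lemma14 (c t m : nat) (S : 'I_t -> {set {set 'I_(3 * c)}})
  (Hsize3 : forall i s, s \in S i -> #|s| = 3)
  (Hm : forall i, #|S i| = m)
  (Hdistinct : injective S)
  (q : 'I_t) (Hyes : X3C_yes (S q)) :
  exists M : {set {set vert (3 * c) t}},
    acyclic_matching (Gvert S) (Gadj S) M /\
    #|M| = 2 * #|Cset S| + (2 * (3 * c)) %/ 3 + 1.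
Proof.
case: Hyes => sub [sub_q exactly_once].
exists (pair_edges (anchors S sub) (partner q sub)); split; first split.
- apply: pair_edges_matching; [exact: partner_out | exact: partner_inj |].
  exact: anchor_edge.
- apply: (@induced_forest_of_parent _ _ _ (rank sub) (parent sub)).
    exact: Gadj_sym.
  move=> x y /(cover_matched exactly_once) x_matched.
  move=> /(cover_matched exactly_once) y_matched.
  exact: (matched_parent sub_q exactly_once x_matched y_matched).
have card_sub : 3 * #|sub| = 3 * c.
  by apply: (card_exact_cover exactly_once) => s /(subsetP sub_q); apply: Hsize3.
have sub_small : #|sub| <= #|Cset S| by exact/subset_leq_card/(sub_C sub_q).
rewrite card_pair_edges; last exact: partner_out.
rewrite card_anchors cardsD (setIidPr (sub_C sub_q)); lia.
Qed.
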